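(* Let $k\ge1$. On $[0,1)$ the function $T_{k,1}$ is nonincreasing and the function $T_{k,k}$ is nondecreasing.
   Context: For an integer $k\ge1$, $f_k:[0,1]\to[0,1]$ denotes the unique decreasing function satisfying $f_k(x)^k-f_k(x)^{k+1}=x^k-x^{k+1}$ for all $x\in[0,1]$; it is continuous with $f_k(0)=1$, $f_k(1)=0$. For $1\le j\le k$ and $y\in[0,1)$ define $T_{k,j}(y):=\dfrac{(1-y)\,y^{j-1}}{f_k(y)^j}$. *)

From Stdlib Require Import Reals Lra Lia.
Open Scope R_scope.

(* Such f exists and is unique, so quantifying over all such f is faithful. *)
Definition is_fk (k : nat) (f : R -> R) : Prop :=
  (forall x, 0 <= x <= 1 -> 0 <= f x <= 1) /\
  (forall x y, 0 <= x -> x < y -> y <= 1 -> f y < f x) /\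
  (forall x, 0 <= x <= 1 -> f x ^ k - f x ^ (k + 1) = x ^ k - x ^ (k + 1)).

Definition T (f : R -> R) (j : nat) (y : R) : R :=
  (1 - y) * y ^ (j - 1) / f y ^ j.

(* Let u = f y.  Since y^k (1 - y) = u^k (1 - u), dividing by y - u gives
   (1 - y) (u^(k-1) + u^(k-2) y + ... + y^(k-1)) = u^k;  at the fixed point
   y = u the same identity holds because that point is the maximum k/(k+1)
   of t^k (1 - t).  Hence, with r = y / f y, which is nondecreasing in y,
   T_{k,1}(y) = 1 / (1 + r + ... + r^(k-1)) and
   T_{k,k}(y) = r^(k-1) / (1 + r + ... + r^(k-1)),
   and both expressions are monotone in r. *)

From Stdlib Require Import Reals Lra Lia.
Open Scope R_scope.

Fixpoint hsum (n : nat) (a b : R) : R :=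
  match n with
  | O => 0
  | S n' => b ^ n' + a * hsum n' a b
  end.

Lemma hsum_mul_sub n a b : (b - a) * hsum n a b = b ^ n - a ^ n.
Proof.
  induction n as [|n IH]; simpl; [ring|].
  replace ((b - a) * (b ^ n + a * hsum n a b))
    with ((b - a) * b ^ n + a * ((b - a) * hsum n a b)) by ring.
  rewrite IH; ring.
Qed.

Lemma hsumSl n a b : hsum (S n) a b = a ^ n + b * hsum n a b.
Proof.
  induction n as [|n IH]; [simpl; ring|].
  change (hsum (S (S n)) a b) with (b ^ S n + a * hsum (S n) a b).
  rewrite IH at 1; simpl; ring.
Qed.

Lemma hsum_ge0 n a b : 0 <= a -> 0 <= b -> 0 <= hsum n a b.
Proof.
  intros Ha Hb; induction n as [|n IH]; simpl; [lra|].
  pose proof (pow_le b n Hb); nra.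
Qed.

Lemma hsum_le n a b a' b' :
  0 <= a -> a <= a' -> 0 <= b -> b <= b' -> hsum n a b <= hsum n a' b'.
Proof.
  intros Ha Haa Hb Hbb; induction n as [|n IH]; simpl; [lra|].
  assert (b ^ n <= b' ^ n) by (apply pow_incr; lra).
  pose proof (hsum_ge0 n a b Ha Hb); nra.
Qed.

Lemma hsum_diag m a : hsum (S m) a a = INR (S m) * a ^ m.
Proof.
  induction m as [|m IH]; [simpl; ring|].
  change (hsum (S (S m)) a a) with (a ^ S m + a * hsum (S m) a a).
  rewrite IH, (S_INR (S m)); simpl; ring.
Qed.

Lemma hsum_bounds m a b : 0 <= a -> a <= b ->
  INR (S m) * a ^ m <= hsum (S m) a b <= INR (S m) * b ^ m.
Proof.
  intros Ha Hab; rewrite <- !hsum_diag.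
  split; apply hsum_le; lra.
Qed.

Lemma hsumS_scale m a b c : hsum (S m) (c * a) (c * b) = c ^ m * hsum (S m) a b.
Proof.
  induction m as [|m IH]; [simpl; ring|].
  change (hsum (S (S m)) (c * a) (c * b))
    with ((c * b) ^ S m + c * a * hsum (S m) (c * a) (c * b)).
  rewrite IH, Rpow_mult_distr; simpl; ring.
Qed.

Lemma hsum_one_ge1 m t : 0 <= t -> 1 <= hsum (S m) 1 t.
Proof.
  intros Ht; rewrite hsumSl, pow1.
  pose proof (hsum_ge0 m 1 t ltac:(lra) Ht); nra.
Qed.

Lemma pow_mul_hsum_le m s t : 0 <= s <= t ->
  s ^ m * hsum (S m) 1 t <= t ^ m * hsum (S m) 1 s.
Proof.
  intros Hst; induction m as [|m IH]; [simpl; lra|].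
  rewrite !(hsumSl (S m)), !pow1.
  assert (s ^ S m <= t ^ S m) by (apply pow_incr; lra).
  replace (s ^ S m * (1 + t * hsum (S m) 1 t))
    with (s ^ S m + s * t * (s ^ m * hsum (S m) 1 t)) by (simpl; ring).
  replace (t ^ S m * (1 + s * hsum (S m) 1 s))
    with (t ^ S m + s * t * (t ^ m * hsum (S m) 1 s)) by (simpl; ring).
  assert (0 <= s * t) by nra; nra.
Qed.

Lemma pow_div_hsum_le m s t : 0 <= s <= t ->
  s ^ m / hsum (S m) 1 s <= t ^ m / hsum (S m) 1 t.
Proof.
  intros Hst.
  pose proof (hsum_one_ge1 m s ltac:(lra)).
  pose proof (hsum_one_ge1 m t ltac:(lra)).
  pose proof (pow_mul_hsum_le m s t Hst) as Hcross.
  apply (Rmult_le_reg_r (hsum (S m) 1 s * hsum (S m) 1 t)); [nra|].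
  replace (s ^ m / hsum (S m) 1 s * (hsum (S m) 1 s * hsum (S m) 1 t))
    with (s ^ m * hsum (S m) 1 t) by (field; lra).
  replace (t ^ m / hsum (S m) 1 t * (hsum (S m) 1 s * hsum (S m) 1 t))
    with (t ^ m * hsum (S m) 1 s) by (field; lra).
  exact Hcross.
Qed.

Definition hump (k : nat) (t : R) : R := t ^ k - t ^ (k + 1).

Lemma hump_sub_l k a b :
  hump k b - hump k a = (b - a) * ((1 - b) * hsum k a b - a ^ k).
Proof.
  unfold hump; rewrite Nat.add_1_r.
  replace ((b - a) * ((1 - b) * hsum k a b - a ^ k))
    with ((1 - b) * ((b - a) * hsum k a b) - (b - a) * a ^ k) by ring.
  rewrite hsum_mul_sub; simpl; ring.
Qed.

Lemma hump_sub_r k a b :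
  hump k b - hump k a = (b - a) * ((1 - a) * hsum k a b - b ^ k).
Proof.
  unfold hump; rewrite Nat.add_1_r.
  replace ((b - a) * ((1 - a) * hsum k a b - b ^ k))
    with ((1 - a) * ((b - a) * hsum k a b) - (b - a) * b ^ k) by ring.
  rewrite hsum_mul_sub; simpl; ring.
Qed.

Lemma hump_lt_increasing m a b :
  0 <= a -> a < b -> b <= INR (S m) * (1 - b) -> hump (S m) a < hump (S m) b.
Proof.
  intros Ha Hab Hb.
  assert (HS : 0 < INR (S m)) by apply lt_0_INR, Nat.lt_0_succ.
  apply Rlt_0_minus; rewrite hump_sub_l.
  apply Rmult_lt_0_compat; [lra|].
  destruct (Req_dec a 0) as [->|Ha0].
  - replace (hsum (S m) 0 b) with (b ^ m) by (simpl; ring).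
    assert (0 < b ^ m) by (apply pow_lt; lra).
    rewrite pow_i by lia; nra.
  - destruct (hsum_bounds m a b Ha ltac:(lra)) as [Hlow _].
    assert (0 < a ^ m) by (apply pow_lt; lra).
    assert (0 < 1 - b) by nra.
    assert (0 <= (1 - b) * (hsum (S m) a b - INR (S m) * a ^ m)) by (apply Rmult_le_pos; lra).
    assert (0 <= (INR (S m) * (1 - b) - b) * a ^ m) by (apply Rmult_le_pos; lra).
    assert (0 < (b - a) * a ^ m) by (apply Rmult_lt_0_compat; lra).
    change (a ^ S m) with (a * a ^ m); lra.
Qed.

Lemma hump_lt_decreasing m a b :
  INR (S m) * (1 - a) <= a -> a < b -> b <= 1 -> hump (S m) b < hump (S m) a.
Proof.
  intros Ha Hab Hb.
  assert (HS : 0 < INR (S m)) by apply lt_0_INR, Nat.lt_0_succ.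
  assert (0 < a) by nra.
  apply Rlt_0_minus.
  replace (hump (S m) a - hump (S m) b) with (- (hump (S m) b - hump (S m) a)) by ring.
  rewrite hump_sub_r.
  destruct (hsum_bounds m a b ltac:(lra) ltac:(lra)) as [_ Hup].
  assert (0 < b ^ m) by (apply pow_lt; lra).
  assert (0 <= (1 - a) * (INR (S m) * b ^ m - hsum (S m) a b)) by (apply Rmult_le_pos; lra).
  assert (0 <= (a - INR (S m) * (1 - a)) * b ^ m) by (apply Rmult_le_pos; lra).
  assert (0 < (b - a) * b ^ m) by (apply Rmult_lt_0_compat; lra).
  change (b ^ S m) with (b * b ^ m).
  rewrite Ropp_mult_distr_r; apply Rmult_lt_0_compat; lra.
Qed.

Section FixedFunction.

Variables (m : nat) (f : R -> R).
Hypothesis Hf : is_fk (S m) f.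

Lemma is_fk_pos y : 0 <= y < 1 -> 0 < f y.
Proof.
  destruct Hf as [Hr [Hd _]]; intros Hy.
  pose proof (Hr 1 ltac:(lra)); pose proof (Hd y 1 ltac:(lra) ltac:(lra) ltac:(lra)).
  lra.
Qed.

Lemma is_fk_antitone x y : 0 <= x -> x <= y -> y <= 1 -> f y <= f x.
Proof.
  destruct Hf as [_ [Hd _]]; intros Hx Hxy Hy.
  destruct (Req_dec x y) as [->|Hne]; [lra|].
  left; apply Hd; lra.
Qed.

Lemma is_fk_hump y : 0 <= y <= 1 -> hump (S m) (f y) = hump (S m) y.
Proof. destruct Hf as [_ [_ He]]; exact (He y). Qed.

(* The fixed point of f must sit at the maximum p = k/(k+1) of the hump:
   otherwise f p and p lie on the same side of p, where the hump is injective. *)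
Lemma is_fk_fixed_point c : 0 <= c <= 1 -> f c = c -> c = INR (S m) * (1 - c).
Proof.
  destruct Hf as [Hr [Hd _]]; intros Hc Hfc.
  set (p := INR (S m) / (INR (S m) + 1)).
  assert (HS : 0 < INR (S m)) by apply lt_0_INR, Nat.lt_0_succ.
  assert (Hp : p = INR (S m) * (1 - p)) by (unfold p; field; lra).
  assert (Hp01 : 0 < p < 1) by (clearbody p; nra).
  pose proof (is_fk_hump p ltac:(lra)) as Hhp.
  pose proof (Hr p ltac:(lra)).
  destruct (Rtotal_order c p) as [Hlt|[->|Hgt]]; [|exact Hp|].
  - assert (f p < c) by (rewrite <- Hfc; apply Hd; lra).
    pose proof (hump_lt_increasing m (f p) p ltac:(lra) ltac:(lra) ltac:(lra)); lra.
  - assert (c < f p) by (rewrite <- Hfc; apply Hd; lra).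
    pose proof (hump_lt_decreasing m p (f p) ltac:(lra) ltac:(lra) ltac:(lra)); lra.
Qed.

Lemma is_fk_hsum_identity y : 0 <= y < 1 -> (1 - y) * hsum (S m) (f y) y = f y ^ S m.
Proof.
  intros Hy.
  destruct (Req_dec y (f y)) as [Hfix|Hne].
  - rewrite <- Hfix, hsum_diag.
    transitivity (INR (S m) * (1 - y) * y ^ m); [ring|].
    rewrite <- (is_fk_fixed_point y ltac:(lra) (eq_sym Hfix)); reflexivity.
  - pose proof (hump_sub_l (S m) (f y) y) as Hsub.
    rewrite (is_fk_hump y ltac:(lra)), Rminus_diag in Hsub.
    symmetry in Hsub; apply Rmult_integral in Hsub as [?|?]; lra.
Qed.

Lemma T1_hsum y : 0 <= y < 1 -> T f 1 y = / hsum (S m) 1 (y / f y).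
Proof.
  intros Hy.
  pose proof (is_fk_pos y Hy) as Hu.
  assert (Hsplit : hsum (S m) (f y) y = f y ^ m * hsum (S m) 1 (y / f y)).
  { rewrite <- hsumS_scale; f_equal; field; lra. }
  pose proof (is_fk_hsum_identity y Hy) as Hid.
  rewrite Hsplit in Hid.
  set (r := y / f y) in *.
  pose proof (hsum_one_ge1 m r ltac:(apply Rmult_le_pos; [lra|left; apply Rinv_0_lt_compat; lra])).
  assert (Hkey : (1 - y) * hsum (S m) 1 r = f y).
  { apply (Rmult_eq_reg_l (f y ^ m)); [|apply pow_nonzero; lra].
    transitivity ((1 - y) * (f y ^ m * hsum (S m) 1 r)); [ring|].
    rewrite Hid; simpl; ring. }
  change (T f 1 y) with ((1 - y) * y ^ 0 / f y ^ 1).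
  rewrite pow_O, pow_1, <- Hkey; field; split; lra.
Qed.

Lemma Tk_T1 y : 0 <= y < 1 -> T f (S m) y = (y / f y) ^ m * T f 1 y.
Proof.
  intros Hy; pose proof (is_fk_pos y Hy) as Hu.
  unfold T, Rdiv; rewrite Rpow_mult_distr, pow_inv.
  replace (S m - 1)%nat with m by lia; simpl.
  field; split; [lra|apply pow_nonzero; lra].
Qed.

Lemma ratio_monotone x y : 0 <= x -> x <= y -> y < 1 ->
  0 <= x / f x <= y / f y.
Proof.
  intros Hx Hxy Hy.
  pose proof (is_fk_pos x ltac:(lra)); pose proof (is_fk_pos y ltac:(lra)).
  pose proof (is_fk_antitone x y Hx Hxy ltac:(lra)).
  unfold Rdiv; split.
  - apply Rmult_le_pos; [lra|left; apply Rinv_0_lt_compat; lra].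
  - apply Rmult_le_compat; try lra.
    + left; apply Rinv_0_lt_compat; lra.
    + apply Rinv_le_contravar; lra.
Qed.

End FixedFunction.

Theorem mainTheorem8 (k : nat) (f : R -> R) :
  (1 <= k)%nat -> is_fk k f ->
  (forall x y, 0 <= x -> x <= y -> y < 1 -> T f 1 y <= T f 1 x) /\
  (forall x y, 0 <= x -> x <= y -> y < 1 -> T f k x <= T f k y).
Proof.
  intros Hk Hf; destruct k as [|m]; [lia|].
  split; intros x y Hx Hxy Hy;
    pose proof (ratio_monotone m f Hf x y Hx Hxy Hy) as Hr.
  - rewrite !(T1_hsum m f Hf) by lra.
    apply Rinv_le_contravar.
    + pose proof (hsum_one_ge1 m (x / f x) ltac:(lra)); lra.
    + apply hsum_le; lra.
  - rewrite !(Tk_T1 m f Hf), !(T1_hsum m f Hf) by lra.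
    exact (pow_div_hsum_le m _ _ Hr).
Qed.
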